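(* Let $S=\mathbb{K}[x_1,\dots,x_n]$ be a polynomial ring over a field $\mathbb{K}$. Let $\mathcal{C}=(V,E)$ be a clutter with $V\subseteq\{x_1,\dots,x_n\}$, and let $\mathcal{C}'=(V,E')$ be the clutter obtained from $\mathcal{C}$ by removing all edges that contain a free vertex. Let $\beta(\mathcal{C}')$ be the matching number of $\mathcal{C}'$. Then \[ \operatorname{sreg}(S/I(\mathcal{C}))\le |V|-|E|+|E'|-\beta(\mathcal{C}'). \]
   Context: A clutter $\mathcal{C}=(V,E)$ consists of a finite vertex set $V$ and a collection $E$ of subsets of $V$ (edges), no edge containing another; vertices are identified with variables and $I(\mathcal{C})=(\prod_{x\in e}x : e\in E)\subset S$ is the edge ideal. An edge $e$ contains a free vertex if some $x\in e$ belongs to no other edge of $\mathcal{C}$. A matching is a set of pairwise disjoint edges; the matching number is the maximum size of a matching. Stanley regularity: for a squarefree monomial ideal $I\subset S$, a squarefree Stanley decomposition of $S/I$ is a decomposition $S/I=\bigoplus_{i=1}^r u_i\mathbb{K}[Z_i]$ as $\mathbb{K}$-vector spaces, where $Z_i\subseteq\{x_1,\dots,x_n\}$, $u_i$ are (images of) squarefree monomials with $\operatorname{supp}(u_i)\subseteq Z_i$, and each $u_i\mathbb{K}[Z_i]$ is the $\mathbb{K}$-span of $u_iv$, $v$ a monomial of $\mathbb{K}[Z_i]$, free over $\mathbb{K}[Z_i]$. Its Stanley regularity is $\max_i\deg(u_i)$, and $\operatorname{sreg}(S/I)$ is the minimum of this over all such decompositions. *)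

From HB Require Import structures.
From mathcomp Require Import all_boot all_order all_algebra.
From mathcomp Require Import mpoly.
Set Implicit Arguments. Unset Strict Implicit. Unset Printing Implicit Defensive.
Import GRing.Theory.
Local Open Scope ring_scope.

(* Variables x_1..x_n are indexed by 'I_n; a vertex set / edge is a {set 'I_n}. *)

Definition is_clutter (n : nat) (V : {set 'I_n}) (E : {set {set 'I_n}}) : Prop :=
  (forall e, e \in E -> e \subset V) /\
  (forall e f, e \in E -> f \in E -> e \subset f -> e = f).

Definition free_vertex (n : nat) (E : {set {set 'I_n}}) (e : {set 'I_n}) (x : 'I_n) : bool :=
  (x \in e) && [forall f in E, (x \in f) ==> (f == e)].

Definition remove_free_edges (n : nat) (E : {set {set 'I_n}}) : {set {set 'I_n}} :=
  [set e in E | ~~ [exists x, free_vertex E e x]].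

Definition is_matching (n : nat) (E M : {set {set 'I_n}}) : bool :=
  (M \subset E) && [forall e in M, forall f in M, (e != f) ==> [disjoint e & f]].

Definition matching_number (n : nat) (E : {set {set 'I_n}}) : nat :=
  \max_(M : {set {set 'I_n}} | is_matching E M) #|M|.

Definition sqmono (n : nat) (K : fieldType) (u : {set 'I_n}) : {mpoly K[n]} :=
  \prod_(i in u) 'X_i.

Definition in_edge_ideal (n : nat) (K : fieldType) (E : {set {set 'I_n}})
    (q : {mpoly K[n]}) : Prop :=
  exists g : {set 'I_n} -> {mpoly K[n]}, q = \sum_(e in E) g e * sqmono K e.

Definition in_subring (n : nat) (K : fieldType) (Z : {set 'I_n}) (f : {mpoly K[n]}) : Prop :=
  forall m, m \in msupp f -> forall i : 'I_n, i \notin Z -> m i = 0%N.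

(* A squarefree Stanley decomposition of S/I(C) with r pieces u_j K[Z_j]:
   - supp(u_j) subset of Z_j;
   - freeness: f |-> image of u_j f in S/I is injective on K[Z_j];
   - spanning: S/I is the sum of the images of the u_j K[Z_j];
   - directness: the sum of these images in S/I is direct. *)
Definition sq_stanley_decomposition (n : nat) (K : fieldType) (E : {set {set 'I_n}})
    (r : nat) (u Z : 'I_r -> {set 'I_n}) : Prop :=
  (forall j, u j \subset Z j) /\
  (forall j (f : {mpoly K[n]}), in_subring (Z j) f ->
      in_edge_ideal E (sqmono K (u j) * f) -> f = 0) /\
  (forall p : {mpoly K[n]}, exists (q : {mpoly K[n]}) (f : 'I_r -> {mpoly K[n]}),
      in_edge_ideal E q /\ (forall j, in_subring (Z j) (f j)) /\
      p = q + \sum_j sqmono K (u j) * f j) /\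
  (forall f : 'I_r -> {mpoly K[n]}, (forall j, in_subring (Z j) (f j)) ->
      in_edge_ideal E (\sum_j sqmono K (u j) * f j) ->
      forall j, in_edge_ideal E (sqmono K (u j) * f j)).

(* sreg(S/I(C)) <= b  iff  some squarefree Stanley decomposition has
   Stanley regularity max_j deg(u_j) <= b (sreg being the minimum). *)
Definition sreg_le (n : nat) (K : fieldType) (E : {set {set 'I_n}}) (b : int) : Prop :=
  exists (r : nat) (u Z : 'I_r -> {set 'I_n}),
    sq_stanley_decomposition K E u Z /\ forall j, (#|u j|%:Z <= b)%R.

(* Squarefree monomials outside I(C) correspond to the faces of the independence complex
   of C, so a partition of these faces into Boolean intervals [u_j, Z_j] gives a squarefree
   Stanley decomposition with pieces u_j K[Z_j].  Choose a free vertex x_e in every edge e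
   having one, and let X be the set of these.  For every face G of V \ X, the interval from G
   to G together with the x_e such that e \ x_e is not in G (and all variables outside V)
   consists of faces, and these intervals partition all faces, G being recovered from a
   face F as its intersection with V \ X.  Edges of C' avoid X, so a maximum matching of C'
   has a vertex outside G in each of its edges; hence |G| <= |V| - |X| - beta(C'), while
   |X| = |E| - |E'|. *)

From HB Require Import structures.
From mathcomp Require Import all_boot all_order all_algebra.
From mathcomp Require Import mpoly zify.
Set Implicit Arguments. Unset Strict Implicit. Unset Printing Implicit Defensive.
Import GRing.Theory.
Local Open Scope ring_scope.

Section EdgeIdeal.
Variables (n : nat) (K : fieldType).
Implicit Types (E : {set {set 'I_n}}) (F Z : {set 'I_n}) (p q f : {mpoly K[n]}) (m : 'X_{1..n}).

Definition mnm_supp m : {set 'I_n} := [set i | m i != 0%N].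

Definition face E F : bool := [forall e in E, ~~ (e \subset F)].

Lemma faceP E F : reflect (forall e, e \in E -> ~~ (e \subset F)) (face E F).
Proof. exact: forall_inP. Qed.

Lemma face_subset E F F' : F' \subset F -> face E F -> face E F'.
Proof.
move=> sF'F /faceP faceF; apply/faceP => e eE.
by apply: contra (faceF e eE) => /subset_trans; apply.
Qed.

Lemma sqmonoE (u : {set 'I_n}) : sqmono K u = 'X_[mesym1 u].
Proof.
rewrite /sqmono mprodXE; congr 'X_[_].
apply/mnmP=> i; rewrite mnmE mnm_sumE big_mkcond /=.
rewrite (bigD1 i) //= mnmE eqxx /= big1 ?addn0 // => j ne_ji.
by case: (_ \in _); rewrite // mnmE (negbTE ne_ji).
Qed.

Lemma msupp_sqmonoM (u : {set 'I_n}) f a :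
  a \in msupp (sqmono K u * f) -> exists2 m, m \in msupp f & a = (mesym1 u + m)%MM.
Proof.
rewrite sqmonoE mulrC (perm_mem (msuppMX _ _)) => /mapP [m mf ->].
by exists m.
Qed.

Lemma mcoeff_sqmonoM (u : {set 'I_n}) f m :
  (sqmono K u * f)@_(mesym1 u + m) = f@_m.
Proof. by rewrite sqmonoE mulrC mcoeffMX. Qed.

Lemma mnm_supp_mesym1D (u : {set 'I_n}) m : mnm_supp (mesym1 u + m) = u :|: mnm_supp m.
Proof.
apply/setP=> i; rewrite !inE mnmDE /mesym1 mnmE.
by case: (i \in u); rewrite ?addn_eq0.
Qed.

Lemma mesym1_le_mnm (u : {set 'I_n}) m : u \subset mnm_supp m -> (mesym1 u <= m)%MM.
Proof.
move/subsetP=> sub_u; apply/mnm_lepP=> i; rewrite /mesym1 mnmE.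
by case ui: (i \in u) => //; move: (sub_u i ui); rewrite inE lt0n.
Qed.

Lemma edge_ideal0 E : in_edge_ideal E (0 : {mpoly K[n]}).
Proof. by exists (fun _ => 0); rewrite big1 // => e _; rewrite mul0r. Qed.

Lemma edge_idealD E p q :
  in_edge_ideal E p -> in_edge_ideal E q -> in_edge_ideal E (p + q).
Proof.
move=> [g ->] [h ->]; exists (fun e => g e + h e).
by rewrite -big_split /=; apply: eq_bigr => e _; rewrite mulrDl.
Qed.

Lemma edge_ideal_msupp E p m :
  in_edge_ideal E p -> m \in msupp p -> ~~ face E (mnm_supp m).
Proof.
move=> [g ->]; apply: contraL => /faceP faceM.
rewrite mcoeff_msupp raddf_sum /= big1 ?eqxx // => e eE.
apply/eqP; rewrite mcoeff_eq0; apply/negP.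
rewrite mulrC => /msupp_sqmonoM [m' _ def_m].
by apply/negP: (faceM e eE); rewrite def_m mnm_supp_mesym1D subsetUl.
Qed.

Lemma edge_ideal_monomial E (c : K) m :
  ~~ face E (mnm_supp m) -> in_edge_ideal E (c *: 'X_[m]).
Proof.
case/forall_inPn => e eE; rewrite negbK => sub_e.
exists (fun e' => if e' == e then c *: 'X_[m - mesym1 e] else 0).
rewrite (bigD1 e) //= eqxx big1 ?addr0; last first.
  by move=> e' /andP[_ /negbTE ->]; rewrite mul0r.
by rewrite sqmonoE -scalerAl -mpolyXD submK // mesym1_le_mnm.
Qed.

Lemma in_subring_msupp Z f m : in_subring Z f -> m \in msupp f -> mnm_supp m \subset Z.
Proof.
move=> fZ mf; apply/subsetP=> i; rewrite inE; apply: contraR => iZ.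
by rewrite (fZ m mf i iZ).
Qed.

Lemma in_subring0 Z : in_subring Z (0 : {mpoly K[n]}).
Proof. by move=> m; rewrite msupp0. Qed.

Lemma in_subringD Z f g : in_subring Z f -> in_subring Z g -> in_subring Z (f + g).
Proof.
move=> fZ gZ m /msuppD_le; rewrite mem_cat => /orP[] mf; [exact: fZ | exact: gZ].
Qed.

Lemma in_subring_monomial Z (c : K) m : mnm_supp m \subset Z -> in_subring Z (c *: 'X_[m]).
Proof.
move=> sub_m a /msuppZ_le; rewrite msuppX inE => /eqP -> i iZ.
by apply/eqP; apply: contraR iZ => mi; apply: (subsetP sub_m); rewrite inE.
Qed.

End EdgeIdeal.

Section IntervalPartition.
Variables (n : nat) (K : fieldType) (E : {set {set 'I_n}}) (r : nat) (u Z : 'I_r -> {set 'I_n}).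
Implicit Types (F : {set 'I_n}) (f : {mpoly K[n]}).

Definition in_interval j F : bool := (u j \subset F) && (F \subset Z j).

Hypothesis u_sub_Z : forall j, u j \subset Z j.
Hypothesis interval_face : forall j F, in_interval j F -> face E F.
Hypothesis face_in_interval : forall F, face E F -> exists j, in_interval j F.
Hypothesis interval_disjoint : forall j k F, in_interval j F -> in_interval k F -> j = k.

Lemma msupp_piece j f a : in_subring (Z j) f ->
  a \in msupp (sqmono K (u j) * f) -> in_interval j (mnm_supp a).
Proof.
move=> fZ /msupp_sqmonoM [m mf ->]; rewrite /in_interval mnm_supp_mesym1D subsetUl.
by rewrite subUset u_sub_Z (in_subring_msupp fZ mf).
Qed.

Lemma piece_eq0 j f : in_subring (Z j) f ->
  (forall a, a \in msupp (sqmono K (u j) * f) -> ~~ face E (mnm_supp a)) -> f = 0.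
Proof.
move=> fZ not_face; apply/eqP; rewrite -msupp_eq0; apply/eqP.
case def_s: (msupp f) => [|m s] //.
have a_supp : (mesym1 (u j) + m)%MM \in msupp (sqmono K (u j) * f).
  by rewrite mcoeff_msupp mcoeff_sqmonoM -mcoeff_msupp def_s mem_head.
by move: (not_face _ a_supp); rewrite (interval_face (msupp_piece fZ a_supp)).
Qed.

Lemma stanley_piece_free j f : in_subring (Z j) f ->
  in_edge_ideal E (sqmono K (u j) * f) -> f = 0.
Proof. by move=> fZ uf_ideal; apply: (piece_eq0 fZ) => a; apply: edge_ideal_msupp. Qed.

Definition stanley_span (p : {mpoly K[n]}) : Prop :=
  exists (q : {mpoly K[n]}) (f : 'I_r -> {mpoly K[n]}),
    in_edge_ideal E q /\ (forall j, in_subring (Z j) (f j)) /\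
    p = q + \sum_j sqmono K (u j) * f j.

Lemma stanley_span_ideal q : in_edge_ideal E q -> stanley_span q.
Proof.
exists q, (fun _ => 0); split=> //; split=> [j|]; first exact: in_subring0.
by rewrite big1 ?addr0 // => j _; rewrite mulr0.
Qed.

Lemma stanley_spanD p p' : stanley_span p -> stanley_span p' -> stanley_span (p + p').
Proof.
move=> [q [f [q_ideal [fZ ->]]]] [q' [f' [q'_ideal [f'Z ->]]]].
exists (q + q'), (fun j => f j + f' j); split; first exact: edge_idealD.
split=> [j|]; first exact: in_subringD.
under [in RHS]eq_bigr => j _ do rewrite mulrDr.
by rewrite big_split /= addrACA.
Qed.

(* A monomial whose support is a face is divided by the u j of its interval. *)
Lemma stanley_span_monomial (c : K) m : stanley_span (c *: 'X_[m]).
Proof.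
have [face_m|] := boolP (face E (mnm_supp m)); last first.
  by move=> not_face; apply/stanley_span_ideal/edge_ideal_monomial.
have [j /andP[u_m m_Z]] := face_in_interval face_m.
exists 0, (fun k => if k == j then c *: 'X_[m - mesym1 (u j)] else 0).
split; first exact: edge_ideal0.
split=> [k|].
  case: eqP => [->|_]; last exact: in_subring0.
  apply: in_subring_monomial; apply: subset_trans m_Z; apply/subsetP => i.
  by rewrite !inE mnmBE; apply: contra => /eqP ->.
rewrite add0r (bigD1 j) //= eqxx big1 ?addr0; last first.
  by move=> k /negbTE ->; rewrite mulr0.
by rewrite sqmonoE -scalerAr -mpolyXD addmC submK // mesym1_le_mnm.
Qed.

Lemma stanley_spanning p : stanley_span p.
Proof.
elim/mpolyind: p => [|c m p _ _ span_p]; first exact/stanley_span_ideal/edge_ideal0.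
exact: stanley_spanD (stanley_span_monomial c m) span_p.
Qed.

Lemma msupp_piece_sum (f : 'I_r -> {mpoly K[n]}) j a :
  (forall k, in_subring (Z k) (f k)) -> a \in msupp (sqmono K (u j) * f j) ->
  a \in msupp (\sum_k sqmono K (u k) * f k).
Proof.
move=> fZ a_j; rewrite mcoeff_msupp raddf_sum /= (bigD1 j) //= big1 ?addr0 -?mcoeff_msupp //.
move=> k k_ne_j; apply/eqP; rewrite mcoeff_eq0; apply/negP => a_k.
by move/negP: k_ne_j; apply; apply/eqP/(interval_disjoint (msupp_piece (fZ k) a_k));
  exact: msupp_piece (fZ j) a_j.
Qed.

Lemma stanley_direct (f : 'I_r -> {mpoly K[n]}) :
  (forall j, in_subring (Z j) (f j)) ->
  in_edge_ideal E (\sum_j sqmono K (u j) * f j) -> forall j, f j = 0.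
Proof.
move=> fZ sum_ideal j; apply: (piece_eq0 (fZ j)) => a a_j.
by apply: (edge_ideal_msupp sum_ideal); apply: msupp_piece_sum a_j.
Qed.

Lemma stanley_decomposition_of_interval_partition : sq_stanley_decomposition K E u Z.
Proof.
split=> //; split; first exact: stanley_piece_free.
split; first exact: stanley_spanning.
by move=> f fZ /(stanley_direct fZ) f0 j; rewrite f0 mulr0; apply: edge_ideal0.
Qed.

End IntervalPartition.

Section Matching.
Variable n : nat.
Local Open Scope nat_scope.
Implicit Types (E M : {set {set 'I_n}}) (G W : {set 'I_n}).

Lemma matching_number_attained E :
  exists2 M, is_matching E M & #|M| = matching_number E.
Proof.
have some_matching : 0 < #|[pred M | is_matching E M]|.
  apply/card_gt0P; exists set0; rewrite inE /is_matching sub0set.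
  by apply/forall_inP => e; rewrite inE.
have [M M_matching max_M] := eq_bigmax_cond (fun M : {set {set 'I_n}} => #|M|) some_matching.
by exists M; [move: M_matching; rewrite inE | rewrite /matching_number max_M].
Qed.

(* Each edge of the matching leaves G at some vertex, and these vertices are distinct. *)
Lemma card_matching_le_face_compl E M G W :
  is_matching E M -> face E G -> (forall e, e \in M -> e \subset W) ->
  #|M| <= #|W :\: G|.
Proof.
case/andP=> /subsetP M_sub_E M_disj faceG M_sub_W; move/faceP: faceG => faceG.
pose out e := [pick y in e :\: G].
have outP e : e \in M -> exists y, out e = Some y /\ y \in e :\: G.
  move=> eM; rewrite /out; case: pickP => [y y_out|none_out]; first by exists y.
  case/negP: (faceG e (M_sub_E e eM)); apply/subsetP => y ye.
  by move: (none_out y); rewrite inE ye andbT => /negbFE.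
have -> : #|M| = #|out @: M|.
  rewrite card_in_imset // => e1 e2 e1M e2M.
  have [y [-> /setDP[ye1 _]]] := outP _ e1M; have [z [-> /setDP[ze2 _]]] := outP _ e2M.
  case=> eq_yz; subst z; apply/eqP; apply: contraT => ne12.
  move/forall_inP: M_disj => /(_ e1 e1M) /forall_inP /(_ e2 e2M).
  by rewrite ne12 => /disjointFr /(_ ye1); rewrite ze2.
rewrite -(card_imset (W :\: G) (@Some_inj _)); apply: subset_leq_card.
apply/subsetP => _ /imsetP [e eM ->]; have [y [-> /setDP[ye yG]]] := outP _ eM.
by apply: imset_f; rewrite in_setD yG (subsetP (M_sub_W e eM)).
Qed.

End Matching.

Section FreeVertexIntervals.
Variables (n : nat) (V : {set 'I_n}) (E : {set {set 'I_n}}).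
Hypothesis edges_sub_V : forall e, e \in E -> e \subset V.
Local Open Scope nat_scope.
Implicit Types (e f F G : {set 'I_n}) (x y : 'I_n).

Local Notation E' := (remove_free_edges E).

Definition free_edges := E :\: E'.

Definition free_rep e := [pick x | free_vertex E e x].

Definition free_reps := [set x | [exists e in free_edges, free_rep e == Some x]].

Definition free_top G :=
  G :|: [set x in free_reps | [forall e in E, (x \in e) ==> ~~ (e :\ x \subset G)]] :|: ~: V.

Definition base_faces := [set G : {set 'I_n} | (G \subset V :\: free_reps) && face E G].

Lemma free_vertex_edge e x f : free_vertex E e x -> f \in E -> x \in f -> f = e.
Proof.
by case/andP=> _ /forall_inP x_only fE xf; apply/eqP; move: (x_only f fE); rewrite xf.
Qed.

Lemma free_edges_sub : free_edges \subset E.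
Proof. exact: subsetDl. Qed.

Lemma remove_free_edges_sub : E' \subset E.
Proof. by apply/subsetP => e; rewrite inE => /andP[]. Qed.

Lemma free_repP e : e \in free_edges ->
  exists x, free_rep e = Some x /\ free_vertex E e x.
Proof.
rewrite !inE negb_and negbK => /andP[/orP[/negbTE notE | has_free] eE].
  by rewrite notE in eE.
rewrite /free_rep; case: pickP => [x x_free|no_free]; first by exists x.
by case/existsP: has_free => x; rewrite no_free.
Qed.

Lemma free_repsP x : x \in free_reps ->
  exists e, [/\ e \in free_edges, free_rep e = Some x & free_vertex E e x].
Proof.
rewrite inE => /exists_inP [e e_free /eqP rep_e]; exists e; split => //.
by have [y [rep_y y_free]] := free_repP e_free; move: rep_e; rewrite rep_y => -[<-].
Qed.

Lemma free_reps_sub_V : free_reps \subset V.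
Proof.
apply/subsetP=> x /free_repsP [e [e_free _ /andP[xe _]]].
exact: subsetP (edges_sub_V (subsetP free_edges_sub e e_free)) x xe.
Qed.

Lemma free_reps_edge_uniq e x y : e \in E -> x \in free_reps -> y \in free_reps ->
  x \in e -> y \in e -> x = y.
Proof.
move=> eE /free_repsP [ex [_ rep_x x_free]] /free_repsP [ey [_ rep_y y_free]] xe ye.
move: rep_x rep_y; rewrite -(free_vertex_edge x_free eE xe) -(free_vertex_edge y_free eE ye).
by move=> -> [].
Qed.

Lemma card_free_reps : #|free_reps| + #|E'| = #|E|.
Proof.
suff -> : #|free_reps| = #|free_edges|.
  by rewrite cardsDS ?subnK ?subset_leq_card ?remove_free_edges_sub.
have -> : #|free_edges| = #|free_rep @: free_edges|.
  rewrite card_in_imset // => e1 e2 e1_free e2_free.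
  have [x [-> x_free]] := free_repP e1_free; have [y [-> y_free]] := free_repP e2_free.
  case=> eq_xy; subst y; apply: (free_vertex_edge y_free (subsetP free_edges_sub _ e1_free)).
  by case/andP: x_free.
rewrite -(card_imset free_reps (@Some_inj _)); apply: eq_card => o.
apply/imsetP/imsetP => [[x /free_repsP [e [e_free rep_e _]] ->]|[e e_free ->]].
  by exists e.
have [x [rep_e _]] := free_repP e_free; exists x; rewrite // inE.
by apply/exists_inP; exists e; rewrite ?rep_e.
Qed.

Lemma remove_free_edges_avoid_reps e : e \in E' -> e \subset V :\: free_reps.
Proof.
rewrite inE => /andP[eE no_free]; apply/subsetP => x xe.
rewrite in_setD (subsetP (edges_sub_V eE)) // andbT; apply/negP.
case/free_repsP => f [_ _ x_free]; have def_e := free_vertex_edge x_free eE xe; subst f.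
by case/existsP: no_free; exists x.
Qed.

Lemma in_free_top G x : x \in free_top G =
  [|| x \in G, (x \in free_reps) && [forall e in E, (x \in e) ==> ~~ (e :\ x \subset G)]
    | x \notin V].
Proof. by rewrite !in_setU in_setC in_set orbA. Qed.

Lemma free_top_core G y : y \in free_top G -> y \in V :\: free_reps -> y \in G.
Proof.
rewrite in_free_top in_setD => /or3P[// | /andP[rep_y _] | notV] /andP[not_rep yV].
  by rewrite rep_y in not_rep.
by rewrite yV in notV.
Qed.

Lemma free_interval_face G F :
  G \in base_faces -> G \subset F -> F \subset free_top G -> face E F.
Proof.
rewrite inE => /andP[G_sub /faceP face_G] G_F F_top; apply/faceP => e eE; apply/negP => e_F.
have core y : y \in e -> y \notin free_reps -> y \in G.
  move=> ye not_rep; apply: free_top_core (subsetP F_top _ (subsetP e_F _ ye)) _.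
  by rewrite in_setD not_rep (subsetP (edges_sub_V eE)).
have [/exists_inP [x xe x_rep] | /exists_inPn no_rep] := boolP [exists x in e, x \in free_reps].
  have: x \in free_top G := subsetP F_top _ (subsetP e_F _ xe).
  have xG : x \notin G by apply: contraL x_rep => /(subsetP G_sub); rewrite inE => /andP[].
  rewrite in_free_top (negbTE xG) (subsetP free_reps_sub_V) // orbF x_rep /=.
  move/forall_inP/(_ e eE); rewrite xe => /negP; apply; apply/subsetP => y.
  rewrite in_setD1 => /andP[y_ne_x ye]; apply: (core _ ye); apply: contra y_ne_x => y_rep.
  by apply/eqP; apply: free_reps_edge_uniq eE y_rep x_rep ye xe.
by case/negP: (face_G e eE); apply/subsetP => y ye; apply: core (no_rep y ye).
Qed.

(* The chosen free vertex x of an edge e lies only in e, so adding x to a face creates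
   no edge unless e :\ x already lies in it. *)
Lemma face_in_free_interval F : face E F ->
  F :&: (V :\: free_reps) \in base_faces /\ F \subset free_top (F :&: (V :\: free_reps)).
Proof.
move=> face_F; split.
  by rewrite inE subsetIr /=; apply: face_subset face_F; apply: subsetIl.
apply/subsetP => i iF; rewrite in_free_top.
case iV: (i \in V); last by rewrite /= !orbT.
case i_rep: (i \in free_reps); last by rewrite in_setI in_setD iF iV i_rep.
rewrite /= orbF; apply/orP; right.
apply/forall_inP => e eE; apply/implyP => ie; apply: contra (faceP _ _ face_F e eE) => e_sub.
apply/subsetP => y ye; case: (eqVneq y i) => [-> // | y_ne_i].
have /(subsetP e_sub) : y \in e :\ i by rewrite in_setD1 y_ne_i.
by rewrite in_setI => /andP[].
Qed.

Lemma free_interval_base G F :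
  G \in base_faces -> G \subset F -> F \subset free_top G -> G = F :&: (V :\: free_reps).
Proof.
rewrite inE => /andP[G_sub _] G_F F_top; apply/setP => y; rewrite inE.
apply/idP/andP => [yG | [yF y_out]]; first by rewrite (subsetP G_F) ?(subsetP G_sub).
exact: free_top_core (subsetP F_top _ yF) y_out.
Qed.

Lemma card_base_face G : G \in base_faces ->
  #|G| + matching_number E' + #|free_reps| <= #|V|.
Proof.
rewrite inE => /andP[G_sub face_G].
have [M M_matching <-] := matching_number_attained E'.
have face'_G : face E' G by apply/faceP => e /(subsetP remove_free_edges_sub); apply/faceP.
have := card_matching_le_face_compl M_matching face'_G (fun e eM =>
  remove_free_edges_avoid_reps (subsetP (proj1 (andP M_matching)) e eM)).
rewrite (cardsDS G_sub) (cardsDS free_reps_sub_V).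
have := subset_leq_card G_sub; rewrite (cardsDS free_reps_sub_V).
have := subset_leq_card free_reps_sub_V.
set g := #|G|; set m := #|M|; set k := #|free_reps|; set v := #|V|; lia.
Qed.

End FreeVertexIntervals.

Theorem theorem4p1 (n : nat) (K : fieldType) (V : {set 'I_n}) (E : {set {set 'I_n}}) :
  is_clutter V E ->
  sreg_le K E
    (#|V|%:Z - #|E|%:Z + #|remove_free_edges E|%:Z
       - (matching_number (remove_free_edges E))%:Z)%R.
Proof.
move=> [edges_sub_V _].
exists #|base_faces V E|, (fun j => enum_val j), (fun j => free_top V E (enum_val j)).
split=> [|j].
  apply: stanley_decomposition_of_interval_partition => [j | j F /andP[G_F F_top] |
      F face_F | j k F /andP[Gj_F F_topj] /andP[Gk_F F_topk]].
  - by rewrite /free_top -setUA subsetUl.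
  - by have := free_interval_face edges_sub_V (enum_valP j); apply.
  - have [G_base F_top] := face_in_free_interval V face_F.
    exists (enum_rank_in G_base (F :&: (V :\: free_reps E))).
    by rewrite /in_interval enum_rankK_in // subsetIl.
  - apply: enum_val_inj.
    by rewrite (free_interval_base (enum_valP j) Gj_F F_topj)
               (free_interval_base (enum_valP k) Gk_F F_topk).
have := card_base_face edges_sub_V (enum_valP j); have := card_free_reps E.
set g := #|enum_val j|; set v := #|V|; set k := #|free_reps E|; set e := #|E|.
set e' := #|remove_free_edges E|; set m := matching_number _; lia.
Qed.
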